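(* Let $m\ge1$ and $n\in\mathbb{Z}$. Suppose the boxes $b_0,\ldots,b_{m-1}$ are independent integer variables, each $b_i$ ranging over the whole integer interval $\{u_i,\ldots,v_i\}$, with $\sum_i u_i\le n\le\sum_i v_i$. Then there is no integer sequence $T=(t_0,\ldots,t_{m-1})$ with $\sum_i t_i<n-m+1$ such that for every admissible $B$ with $\sum_i b_i\le n$ and every $l\in\{1,\ldots,m\}$ there exists $i$ with $\sum_{j=i}^{i+l'-1}b_j\le l'-1+\sum_{j=i}^{i+l'-1}t_j$ for all $l'\in\{1,\ldots,l\}$.
   Context: Indices are taken modulo $m$ (ring arrangement). *)

From mathcomp Require Import all_boot all_order all_algebra.
Set Implicit Arguments. Unset Strict Implicit. Unset Printing Implicit Defensive.
Import Order.TTheory GRing.Theory Num.Theory.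
Local Open Scope ring_scope.

Definition cyc_sum (m : nat) (b : nat -> int) (i l : nat) : int :=
  \sum_(j < l) b ((i + j) %% m)%N.

(* Take the whole ring as the window.  Since box sums fill every integer
   between their extremes, some admissible B has total exactly n, and for
   l = l' = m the required inequality reads n <= m - 1 + sum T, contradicting
   sum T < n - m + 1. *)
From mathcomp Require Import all_boot all_order all_algebra.
From mathcomp Require Import zify.
Set Implicit Arguments. Unset Strict Implicit. Unset Printing Implicit Defensive.
Import Order.TTheory GRing.Theory Num.Theory.
Local Open Scope ring_scope.

Lemma cyc_sum_full (m : nat) (b : nat -> int) (i : nat) :
  cyc_sum m b i m = \sum_(j < m) b j.
Proof.
case: m => [|m]; first by rewrite /cyc_sum !big_ord0.
have lt_im : (i %% m.+1 < m.+1)%N by rewrite ltn_mod.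
rewrite /cyc_sum [RHS](reindex_inj (addrI (Ordinal lt_im))) /=.
by apply: eq_bigr => j _; rewrite modnDml.
Qed.

Lemma box_sum_attains (m : nat) (u v : nat -> int) (n : int) :
  (forall i, (i < m)%N -> u i <= v i) ->
  \sum_(i < m) u i <= n <= \sum_(i < m) v i ->
  exists b : nat -> int,
    (forall i, (i < m)%N -> u i <= b i <= v i) /\ \sum_(i < m) b i = n.
Proof.
elim: m n => [|m IH] n le_uv.
  rewrite !big_ord0 => /andP [ge0_n le0_n].
  by exists (fun _ => 0); split => //; rewrite big_ord0; lia.
have sum_recr (f : nat -> int) : \sum_(i < m.+1) f i = \sum_(i < m) f i + f m.
  by rewrite big_ord_recr.
rewrite !sum_recr => /andP [le_un le_nv].
have le_uv' : forall i, (i < m)%N -> u i <= v i by move=> i lt_im; apply: le_uv; lia.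
have le_uvm := le_uv m (ltnSn m).
have le_sum_uv : \sum_(i < m) u i <= \sum_(i < m) v i by apply: ler_sum => i _; apply: le_uv'.
(* the last box takes [n - sum_{i<m} v i] clamped below by [u m] *)
have [c [le_uc le_cv le_un' le_nv']] : exists c : int,
    [/\ u m <= c, c <= v m, \sum_(i < m) u i <= n - c & n - c <= \sum_(i < m) v i].
  have [le_ru|lt_ur] := leP (n - \sum_(i < m) v i) (u m).
    by exists (u m); split; lia.
  by exists (n - \sum_(i < m) v i); split; lia.
have nc_in : \sum_(i < m) u i <= n - c <= \sum_(i < m) v i by rewrite le_un' le_nv'.
have [b [b_box b_sum]] := IH (n - c) le_uv' nc_in.
exists (fun i => if i == m then c else b i); split.
  by move=> i lt_im; case: eqP => [->|ne_im]; [lia | apply: b_box; lia].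
rewrite (sum_recr (fun i => if i == m then c else b i)) eqxx.
rewrite (eq_bigr (fun i : 'I_m => b i)) ?b_sum; first lia.
by move=> i _; rewrite ifN // neq_ltn ltn_ord.
Qed.

Theorem mainTheorem8 (m : nat) (n : int) (u v : nat -> int) :
  (0 < m)%N ->
  (forall i, (i < m)%N -> u i <= v i) ->
  \sum_(i < m) u i <= n <= \sum_(i < m) v i ->
  ~ (exists t : nat -> int,
       \sum_(i < m) t i < n - (m%:Z) + 1 /\
       forall b : nat -> int,
         (forall i, (i < m)%N -> u i <= b i <= v i) ->
         \sum_(i < m) b i <= n ->
         forall l : nat, (1 <= l <= m)%N ->
           exists i : nat, (i < m)%N /\
             forall l' : nat, (1 <= l' <= l)%N ->
               cyc_sum m b i l' <= (l'%:Z - 1) + cyc_sum m t i l').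
Proof.
move=> m_gt0 le_uv n_in [t [t_small t_covers]].
have [b [b_box b_sum]] := box_sum_attains le_uv n_in.
have le_sum_n : \sum_(i < m) b i <= n by rewrite b_sum.
have m_range : (1 <= m <= m)%N by rewrite m_gt0 leqnn.
have [i [_ window]] := t_covers b b_box le_sum_n m m_range.
have := window m m_range.
rewrite !cyc_sum_full b_sum.
lia.
Qed.
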